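(* Let $(X,d)$ be a metric space such that $d(v,v')\le \pi/2$ for all $v,v'\in X$, and let $T\colon X\to X$ be a mapping. Then: (i) If $T$ is firmly vicinal, then $T$ is vicinal; if moreover $d(v,v')<\pi/2$ for all $v,v'\in X$, then $T$ is firmly spherically nonspreading. (ii) If $T$ is firmly vicinal and $\mathrm{Fix}(T)\neq\emptyset$, then $\cos d(Tx,x)\,\cos d(Tx,y)\ge \cos d(x,y)$ for all $x\in X$ and $y\in \mathrm{Fix}(T)$. (iii) If $T$ is vicinal and $\mathrm{Fix}(T)\ne\emptyset$, then $T$ is quasi-nonexpansive. (iv) If $d(v,v')<\pi/2$ for all $v,v'\in X$, $T$ is firmly vicinal and $\mathrm{Fix}(T)\neq\emptyset$, then $T$ is asymptotically regular.
   Context: $\mathrm{Fix}(T)=\{u\in X: Tu=u\}$. For $z\in X$ put $C_z=\cos d(Tz,z)$. $T$ is called vicinal if for all $x,y\in X$: $\bigl(C_x^2(1+C_y^2)+C_y^2(1+C_x^2)\bigr)\cos d(Tx,Ty)\ge C_x^2(1+C_y^2)\cos d(Tx,y)+C_y^2(1+C_x^2)\cos d(Ty,x)$. $T$ is called firmly vicinal if for all $x,y\in X$: $\bigl(C_x^2(1+C_y^2)C_y+C_y^2(1+C_x^2)C_x\bigr)\cos d(Tx,Ty)\ge C_x^2(1+C_y^2)\cos d(Tx,y)+C_y^2(1+C_x^2)\cos d(Ty,x)$. $T$ is firmly spherically nonspreading if $(C_x+C_y)\cos^2 d(Tx,Ty)\ge 2\cos d(Tx,y)\cos d(Ty,x)$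 for all $x,y\in X$. $T$ is quasi-nonexpansive if $\mathrm{Fix}(T)\neq\emptyset$ and $d(Tx,y)\le d(x,y)$ for all $x\in X$, $y\in\mathrm{Fix}(T)$. $T$ is asymptotically regular if $\lim_{n\to\infty} d(T^{n+1}x,T^nx)=0$ for every $x\in X$. *)

From Stdlib Require Import Reals.
Open Scope R_scope.

Definition is_metric {X : Type} (d : X -> X -> R) : Prop :=
  (forall x y, 0 <= d x y) /\
  (forall x y, d x y = 0 <-> x = y) /\
  (forall x y, d x y = d y x) /\
  (forall x y z, d x z <= d x y + d y z).

Definition Fix {X : Type} (T : X -> X) (u : X) : Prop := T u = u.

Definition Cz {X : Type} (d : X -> X -> R) (T : X -> X) (z : X) : R :=
  cos (d (T z) z).

Definition vicinal {X : Type} (d : X -> X -> R) (T : X -> X) : Prop :=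
  forall x y : X,
    let Cx := Cz d T x in let Cy := Cz d T y in
    (Cx^2 * (1 + Cy^2) + Cy^2 * (1 + Cx^2)) * cos (d (T x) (T y))
      >= Cx^2 * (1 + Cy^2) * cos (d (T x) y) + Cy^2 * (1 + Cx^2) * cos (d (T y) x).

Definition firmly_vicinal {X : Type} (d : X -> X -> R) (T : X -> X) : Prop :=
  forall x y : X,
    let Cx := Cz d T x in let Cy := Cz d T y in
    (Cx^2 * (1 + Cy^2) * Cy + Cy^2 * (1 + Cx^2) * Cx) * cos (d (T x) (T y))
      >= Cx^2 * (1 + Cy^2) * cos (d (T x) y) + Cy^2 * (1 + Cx^2) * cos (d (T y) x).

Definition firmly_spherically_nonspreading {X : Type} (d : X -> X -> R) (T : X -> X) : Prop :=
  forall x y : X,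
    (Cz d T x + Cz d T y) * (cos (d (T x) (T y)))^2
      >= 2 * cos (d (T x) y) * cos (d (T y) x).

Definition quasi_nonexpansive {X : Type} (d : X -> X -> R) (T : X -> X) : Prop :=
  (exists u, Fix T u) /\ (forall x y, Fix T y -> d (T x) y <= d x y).

Definition asymptotically_regular {X : Type} (d : X -> X -> R) (T : X -> X) : Prop :=
  forall x : X, Un_cv (fun n => d (Nat.iter (S n) T x) (Nat.iter n T x)) 0.

(* Since 0 <= C_z <= 1, firm vicinality implies vicinality.  For a fixed point y we have
   C_y = 1, and the vicinality (resp. firm vicinality) inequality at (x, y) collapses to
   cos d(Tx, y) >= cos d(x, y) (resp. C_x cos d(Tx, y) >= cos d(x, y)); this gives (ii) and,
   since cos is decreasing on [0, pi/2], (iii).  For firm spherical nonspreading, writing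
   u = C_x, v = C_y, A = u^2(1+v^2), B = v^2(1+u^2), the AM-GM inequality
   4AB pq <= (Ap + Bq)^2 is combined with (Av + Bu)^2 <= 2AB(u + v).  For (iv), along an orbit
   x_n = T^n x the numbers s_n = cos d(x_n, y) increase and stay in (0, 1], while
   s_n <= C_{x_n} s_{n+1}; so (1 - C_{x_n}) s_0 <= s_{n+1} - s_n -> 0, whence d(x_{n+1}, x_n) -> 0. *)
From Stdlib Require Import Reals Lra Psatz Lia.
Open Scope R_scope.

Lemma firm_weights_le (a b c : R) :
  0 <= a <= 1 -> 0 <= b <= 1 -> 0 <= c ->
  (a^2 * (1 + b^2) * b + b^2 * (1 + a^2) * a) * c
    <= (a^2 * (1 + b^2) + b^2 * (1 + a^2)) * c.
Proof.
  intros Ha Hb Hc. apply Rmult_le_compat_r; [exact Hc|].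
  assert (0 <= a^2 * (1 + b^2) * (1 - b)) by (apply Rmult_le_pos; nra).
  assert (0 <= b^2 * (1 + a^2) * (1 - a)) by (apply Rmult_le_pos; nra).
  lra.
Qed.

Lemma firm_weight_sq_le (u v : R) :
  0 <= u <= 1 -> 0 <= v <= 1 ->
  (u^2 * (1 + v^2) * v + v^2 * (1 + u^2) * u)^2
    <= 2 * (u^2 * (1 + v^2)) * (v^2 * (1 + u^2)) * (u + v).
Proof.
  intros Hu Hv.
  assert (Hcs : (1 + u * v)^2 <= (1 + u^2) * (1 + v^2))
    by (pose proof (pow2_ge_0 (u - v)); nra).
  assert (Hsum : (u + v)^2 <= 2 * (u + v)) by nra.
  replace ((u^2 * (1 + v^2) * v + v^2 * (1 + u^2) * u)^2)
    with ((u * v)^2 * ((u + v)^2 * (1 + u * v)^2)) by ring.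
  replace (2 * (u^2 * (1 + v^2)) * (v^2 * (1 + u^2)) * (u + v))
    with ((u * v)^2 * ((2 * (u + v)) * ((1 + u^2) * (1 + v^2)))) by ring.
  apply Rmult_le_compat_l; [apply pow2_ge_0|].
  apply Rmult_le_compat; nra.
Qed.

Lemma spherical_of_firm_weights (u v c p q : R) :
  0 < u <= 1 -> 0 < v <= 1 -> 0 <= c -> 0 <= p -> 0 <= q ->
  (u^2 * (1 + v^2) * v + v^2 * (1 + u^2) * u) * c
    >= u^2 * (1 + v^2) * p + v^2 * (1 + u^2) * q ->
  (u + v) * c^2 >= 2 * p * q.
Proof.
  intros Hu Hv Hc Hp Hq H.
  set (A := u^2 * (1 + v^2)) in *. set (B := v^2 * (1 + u^2)) in *.
  set (K := A * v + B * u) in *.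
  assert (HA : 0 < A) by (unfold A; nra).
  assert (HB : 0 < B) by (unfold B; nra).
  assert (Hamgm : 4 * A * B * (p * q) <= (A * p + B * q)^2)
    by (pose proof (pow2_ge_0 (A * p - B * q)); nra).
  assert (HKc : (A * p + B * q)^2 <= (K * c)^2).
  { assert (0 <= A * p + B * q) by nra. apply pow_incr; lra. }
  assert (HK : K^2 * c^2 <= 2 * A * B * (u + v) * c^2).
  { apply Rmult_le_compat_r; [apply pow2_ge_0|]. apply firm_weight_sq_le; lra. }
  assert (HAB : 0 < 2 * A * B) by nra.
  assert (2 * A * B * ((u + v) * c^2 - 2 * p * q) >= 0) by nra.
  nra.
Qed.

Lemma cos_bounds_half_PI (t : R) : 0 <= t <= PI / 2 -> 0 <= cos t <= 1.
Proof.
  intros Ht. pose proof PI_RGT_0.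
  split; [apply cos_ge_0; lra | apply COS_bound].
Qed.

Lemma le_of_cos_ge (x y : R) :
  0 <= x <= PI -> 0 <= y <= PI -> cos y <= cos x -> x <= y.
Proof.
  intros Hx Hy Hc. destruct (Rle_or_lt x y) as [|Hlt]; [assumption|].
  pose proof (cos_decreasing_1 y x ltac:(lra) ltac:(lra) ltac:(lra) ltac:(lra) Hlt).
  lra.
Qed.

Lemma Un_cv_succ_sub (s : nat -> R) (l : R) :
  Un_cv s l -> Un_cv (fun n => s (S n) - s n) 0.
Proof.
  intros Hs eps Heps.
  destruct (Hs (eps / 2)) as [N HN]; [lra|].
  exists N. intros n Hn. unfold Rdist.
  pose proof (HN n Hn) as H1. pose proof (HN (S n) ltac:(lia)) as H2.
  unfold Rdist in H1, H2. apply Rabs_def2 in H1. apply Rabs_def2 in H2.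
  apply Rabs_def1; lra.
Qed.

Lemma Un_cv_0_scaled_squeeze (a b : nat -> R) (k : R) :
  0 < k -> (forall n, 0 <= k * a n <= b n) -> Un_cv b 0 -> Un_cv a 0.
Proof.
  intros Hk Hab Hb eps Heps.
  destruct (Hb (k * eps)) as [N HN]; [nra|].
  exists N. intros n Hn.
  pose proof (HN n Hn) as H. pose proof (Hab n) as [H0 H1].
  unfold Rdist in *. rewrite Rminus_0_r in *.
  assert (0 <= a n) by nra.
  rewrite Rabs_pos_eq in * by lra.
  nra.
Qed.

Lemma one_sub_cv_0_of_le_mul_succ (s c : nat -> R) :
  0 < s O -> (forall n, 0 <= s n <= 1) -> (forall n, c n <= 1) ->
  (forall n, s n <= c n * s (S n)) -> Un_cv (fun n => 1 - c n) 0.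
Proof.
  intros Hs0 Hs Hc Hsc.
  assert (Hgrow : Un_growing s).
  { intro n. pose proof (Hsc n). pose proof (Hs (S n)). pose proof (Hc n). nra. }
  assert (Hlow : forall n, s O <= s n).
  { induction n as [|n IH]; [lra|]. pose proof (Hgrow n). lra. }
  destruct (growing_cv s Hgrow) as [l Hl].
  { exists 1. intros r [n ->]. apply Hs. }
  apply (Un_cv_0_scaled_squeeze _ (fun n => s (S n) - s n) (s O) Hs0);
    [|exact (Un_cv_succ_sub s l Hl)].
  (* (1 - c n) s_0 <= (1 - c n) s_{n+1} <= s_{n+1} - s_n *)
  intro n. pose proof (Hsc n). pose proof (Hlow (S n)). pose proof (Hc n). nra.
Qed.

Lemma Un_cv_0_of_cos_defect (t : nat -> R) :
  (forall n, 0 <= t n <= PI / 2) -> Un_cv (fun n => 1 - cos (t n)) 0 -> Un_cv t 0.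
Proof.
  intros Ht Hcos eps Heps. pose proof PI_RGT_0.
  set (e := Rmin eps (PI / 2)).
  assert (He : 0 < e <= PI / 2) by (unfold e; split; [apply Rmin_glb_lt|apply Rmin_r]; lra).
  assert (Hce : cos e < 1)
    by (rewrite <- cos_0; apply cos_decreasing_1; lra).
  destruct (Hcos (1 - cos e)) as [N HN]; [lra|].
  exists N. intros n Hn.
  pose proof (HN n Hn) as Hn'. pose proof (Ht n).
  unfold Rdist in *. rewrite Rminus_0_r in *.
  apply Rabs_def2 in Hn'.
  assert (Hlt : t n < e)
    by (apply cos_decreasing_0; lra).
  rewrite Rabs_pos_eq by lra.
  pose proof (Rmin_l eps (PI / 2)). unfold e in Hlt. lra.
Qed.

Section Vicinal.

Variables (X : Type) (d : X -> X -> R) (T : X -> X).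
Hypothesis Hd : is_metric d.

Lemma Cz_fixed (y : X) : Fix T y -> Cz d T y = 1.
Proof.
  intros Hy. unfold Cz. rewrite Hy.
  destruct Hd as [_ [Hzero _]]. rewrite (proj2 (Hzero y y) eq_refl). apply cos_0.
Qed.

Lemma firmly_vicinal_at_fixed (x y : X) :
  firmly_vicinal d T -> Fix T y -> cos (d (T x) x) * cos (d (T x) y) >= cos (d x y).
Proof.
  intros H Hy. specialize (H x y). cbv zeta in H.
  rewrite (Cz_fixed y Hy), Hy in H.
  destruct Hd as [_ [_ [Hsym _]]]. rewrite (Hsym y x) in H. unfold Cz in H.
  set (c := cos (d (T x) x)) in *.
  assert (Hpos : 0 < 1 + c^2) by nra.
  assert ((1 + c^2) * (c * cos (d (T x) y) - cos (d x y)) >= 0) by nra.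
  nra.
Qed.

Lemma vicinal_at_fixed (x y : X) :
  vicinal d T -> Fix T y -> cos (d (T x) y) >= cos (d x y).
Proof.
  intros H Hy. specialize (H x y). cbv zeta in H.
  rewrite (Cz_fixed y Hy), Hy in H.
  destruct Hd as [_ [_ [Hsym _]]]. rewrite (Hsym y x) in H. unfold Cz in H.
  set (c := cos (d (T x) x)) in *.
  assert (Hpos : 0 < 1 + c^2) by nra.
  assert ((1 + c^2) * (cos (d (T x) y) - cos (d x y)) >= 0) by nra.
  nra.
Qed.

Hypothesis Hdiam : forall v v' : X, d v v' <= PI / 2.

Lemma dist_bounds (v v' : X) : 0 <= d v v' <= PI / 2.
Proof. split; [apply (proj1 Hd) | apply Hdiam]. Qed.

Lemma cos_dist_bounds (v v' : X) : 0 <= cos (d v v') <= 1.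
Proof. apply cos_bounds_half_PI, dist_bounds. Qed.

Lemma firmly_vicinal_vicinal : firmly_vicinal d T -> vicinal d T.
Proof.
  intros H x y. specialize (H x y). cbv zeta in H |- *. unfold Cz in *.
  pose proof (firm_weights_le (cos (d (T x) x)) (cos (d (T y) y)) (cos (d (T x) (T y)))
    (cos_dist_bounds _ _) (cos_dist_bounds _ _) (proj1 (cos_dist_bounds _ _))).
  lra.
Qed.

Lemma firmly_vicinal_spherically_nonspreading :
  (forall v v' : X, d v v' < PI / 2) ->
  firmly_vicinal d T -> firmly_spherically_nonspreading d T.
Proof.
  intros Hs H x y. specialize (H x y). cbv zeta in H. unfold Cz in *.
  assert (Hpos : forall v v', 0 < cos (d v v')).
  { intros v v'. pose proof (dist_bounds v v'). pose proof PI_RGT_0.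
    apply cos_gt_0; [lra | apply Hs]. }
  apply spherical_of_firm_weights; try exact H.
  - split; [apply Hpos | apply cos_dist_bounds].
  - split; [apply Hpos | apply cos_dist_bounds].
  - apply cos_dist_bounds.
  - apply cos_dist_bounds.
  - apply cos_dist_bounds.
Qed.

Lemma vicinal_quasi_nonexpansive :
  vicinal d T -> (exists u, Fix T u) -> quasi_nonexpansive d T.
Proof.
  intros H Hu. split; [exact Hu|]. intros x y Hy. pose proof PI_RGT_0.
  pose proof (dist_bounds (T x) y). pose proof (dist_bounds x y).
  apply le_of_cos_ge; try lra.
  apply Rge_le, (vicinal_at_fixed x y H Hy).
Qed.

Lemma firmly_vicinal_asymptotically_regular :
  (forall v v' : X, d v v' < PI / 2) ->
  firmly_vicinal d T -> (exists u, Fix T u) -> asymptotically_regular d T.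
Proof.
  intros Hs H [y Hy] x.
  set (z := fun n => Nat.iter n T x).
  apply Un_cv_0_of_cos_defect; [intro n; apply dist_bounds|].
  apply (one_sub_cv_0_of_le_mul_succ (fun n => cos (d (z n) y))).
  - pose proof (dist_bounds x y). pose proof PI_RGT_0.
    apply cos_gt_0; simpl; [lra | apply Hs].
  - intro n. apply cos_dist_bounds.
  - intro n. apply cos_dist_bounds.
  - intro n. apply Rge_le, (firmly_vicinal_at_fixed (z n) y H Hy).
Qed.

End Vicinal.

Theorem lemma3p2 (X : Type) (d : X -> X -> R) (T : X -> X)
  (Hd : is_metric d) (Hdiam : forall v v' : X, d v v' <= PI / 2) :
  (firmly_vicinal d T -> vicinal d T) /\
  (firmly_vicinal d T -> (forall v v' : X, d v v' < PI / 2) ->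
     firmly_spherically_nonspreading d T) /\
  (firmly_vicinal d T -> (exists u, Fix T u) ->
     forall x y : X, Fix T y -> cos (d (T x) x) * cos (d (T x) y) >= cos (d x y)) /\
  (vicinal d T -> (exists u, Fix T u) -> quasi_nonexpansive d T) /\
  ((forall v v' : X, d v v' < PI / 2) -> firmly_vicinal d T -> (exists u, Fix T u) ->
     asymptotically_regular d T).
Proof.
  split; [|split; [|split; [|split]]].
  - exact (firmly_vicinal_vicinal X d T Hd Hdiam).
  - intros H Hs. exact (firmly_vicinal_spherically_nonspreading X d T Hd Hdiam Hs H).
  - intros H _ x y. exact (firmly_vicinal_at_fixed X d T Hd x y H).
  - exact (vicinal_quasi_nonexpansive X d T Hd Hdiam).
  - exact (firmly_vicinal_asymptotically_regular X d T Hd Hdiam).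
Qed.
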